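(* Let $G$ be a connected hypergraph, let $u\in V(G)$, and let $v,w$ be two neighbors of $u$ that are not adjacent to each other. Let $x=x(G)$. Then $x_w+x_u-x_v>0$.
   Context: A (simple) hypergraph has edges that are vertex subsets of size at least two; two vertices are adjacent (neighbors) if some edge contains both. A loose path is an alternating sequence $(v_0,e_1,v_1,\dots,e_p,v_p)$ of distinct vertices and distinct edges with $v_{i-1},v_i\in e_i$ and $e_i\cap e_j=\emptyset$ whenever $j>i+1$; $G$ is connected if any two vertices are joined by one, and $d_G(u,v)$ is the length of a shortest loose path from $u$ to $v$. $D(G)=(d_G(u,v))$ is the distance matrix, and $x(G)$ is the unique unit positive eigenvector of $D(G)$ for its largest eigenvalue (distance Perron vector). *)

From HB Require Import structures.
From mathcomp Require Import all_boot all_order all_algebra.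
Set Implicit Arguments. Unset Strict Implicit. Unset Printing Implicit Defensive.
Import Order.TTheory GRing.Theory Num.Theory.

Definition hypergraph (n : nat) (E : {set {set 'I_n}}) : Prop :=
  forall e, e \in E -> 2 <= #|e|.

Definition adjacent (n : nat) (E : {set {set 'I_n}}) (a b : 'I_n) : bool :=
  (a != b) && [exists e in E, (a \in e) && (b \in e)].

(* A loose path of length p from u to v: vertices vs = (v_0,...,v_p),
   edges es = (e_1,...,e_p) stored 0-indexed (nth es k = e_{k+1}). *)
Definition loose_path (n : nat) (E : {set {set 'I_n}}) (u v : 'I_n) (p : nat)
  (vs : p.+1.-tuple 'I_n) (es : p.-tuple {set 'I_n}) : bool :=
  [&& uniq vs, uniq es, all (fun e => e \in E) es,
      nth u vs 0 == u, nth u vs p == v,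
      [forall i : 'I_p, (nth u vs i \in nth set0 es i)
                         && (nth u vs i.+1 \in nth set0 es i)] &
      [forall i : 'I_p, forall j : 'I_p,
          (i.+1 < j) ==> [disjoint nth set0 es i & nth set0 es j]]].

Definition has_loose_path (n : nat) (E : {set {set 'I_n}}) (u v : 'I_n) (p : nat) : bool :=
  [exists vs : p.+1.-tuple 'I_n, exists es : p.-tuple {set 'I_n}, loose_path E u v vs es].

Definition connected (n : nat) (E : {set {set 'I_n}}) : Prop :=
  forall u v : 'I_n, exists p, has_loose_path E u v p.

(* d_G(u,v): least p with a loose path of length p (a loose path has
   p+1 distinct vertices, so p < n; the value n means "no path"). *)
Definition hdist (n : nat) (E : {set {set 'I_n}}) (u v : 'I_n) : nat :=
  find (has_loose_path E u v) (iota 0 n).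

Local Open Scope ring_scope.

Definition dist_matrix (R : nzRingType) (n : nat) (E : {set {set 'I_n}}) : 'M[R]_n :=
  \matrix_(i, j) (hdist E i j)%:R.

Definition distance_perron_vector (R : realFieldType) (n : nat)
  (E : {set {set 'I_n}}) (x : 'cV[R]_n) : Prop :=
  exists rho : R,
    [/\ eigenvalue (dist_matrix R E) rho,
        (forall a : R, eigenvalue (dist_matrix R E) a -> a <= rho),
        dist_matrix R E *m x = rho *: x,
        (forall i, 0 < x i 0) &
        \sum_i (x i 0) ^+ 2 = 1].

From HB Require Import structures.
From mathcomp Require Import all_boot all_order all_algebra.
From mathcomp Require Import zify lra.
From Stdlib Require Import Classical.
Set Implicit Arguments.
Unset Strict Implicit.
Unset Printing Implicit Defensive.
Import Order.TTheory GRing.Theory Num.Theory.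

(* Let s := x_w + x_u - x_v. Reading D x = rho x at w, u and v gives
   rho s = sum_z (d(w,z) + d(u,z) - d(v,z)) x_z.  As v ~ u we have
   d(v,z) <= d(u,z) + 1, and d(w,z) >= 1 for z <> w, so every coefficient is
   nonnegative, except the one at z = w, which is at least -1; the one at
   z = v is at least d(u,v) >= 1.  Hence rho s >= x_v - x_w, and if s <= 0
   then x_v <= x_w (as rho >= 0), so s >= x_u > 0 after all.
   The triangle-type inequality for the loose-path distance holds because a
   walk admitting no shortcut (a strictly shorter walk between two of its
   vertices) is a loose path: shortcuts of length 0, 1 and 2 come from a
   repeated vertex, a common edge, and a common neighbour of non-consecutive
   vertices. *)

Section LooseDistance.
Variables (n : nat) (E : {set {set 'I_n}}).

Definition walk (f : nat -> 'I_n) (a b : 'I_n) (q : nat) : Prop :=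
  [/\ f 0 = a, f q = b & forall i, i < q -> adjacent E (f i) (f i.+1)].

Lemma adjacent_sym a b : adjacent E a b -> adjacent E b a.
Proof.
rewrite /adjacent eq_sym => /andP[-> /existsP[X /andP[XE /andP[aX bX]]]].
by apply/existsP; exists X; rewrite XE aX bX.
Qed.

Lemma edge_adjacent X a b :
  X \in E -> a \in X -> b \in X -> a != b -> adjacent E a b.
Proof.
move=> XE aX bX ab; rewrite /adjacent ab.
by apply/existsP; exists X; rewrite XE aX bX.
Qed.

Definition edge_of (a b : 'I_n) : {set 'I_n} :=
  odflt set0 [pick X in E | (a \in X) && (b \in X)].

Lemma edge_ofP a b : adjacent E a b ->
  [/\ edge_of a b \in E, a \in edge_of a b & b \in edge_of a b].
Proof.
case/andP=> _ /existsP[X /andP[XE abX]]; rewrite /edge_of.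
case: pickP => [Y /andP[YE /andP[aY bY]] | /(_ X)] //=.
by rewrite XE abX.
Qed.

Lemma walk0 a : walk (fun=> a) a a 0.
Proof. by []. Qed.

Lemma walk1 a b :
  adjacent E a b -> walk (fun k => if k == 0 then a else b) a b 1.
Proof. by move=> ab; split=> // [[]]. Qed.

Definition catw (f : nat -> 'I_n) (p : nat) (g : nat -> 'I_n) (k : nat)
  : 'I_n :=
  if k <= p then f k else g (k - p).

Lemma walk_cat f g a b c p q :
  walk f a b p -> walk g b c q -> walk (catw f p g) a c (p + q).
Proof.
move=> [f0 fp fA] [g0 gq gA]; rewrite /catw; split.
- by rewrite leq0n.
- case: leqP => [pqp | _]; last by rewrite addKn.
  have q0 : q = 0 by lia.
  by move: gq; rewrite q0 addn0 fp g0.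
- move=> k kpq; case: (ltngtP k p) => [kp | pk | kp].
  + exact: fA.
  + by rewrite (subSn (ltnW pk)); apply: gA; lia.
  + by rewrite kp subSnn fp -g0; apply: gA; lia.
Qed.

Lemma walk_take f a b q i : walk f a b q -> i <= q -> walk f a (f i) i.
Proof. by move=> [f0 _ fA] iq; split=> // k ki; apply: fA; lia. Qed.

Lemma walk_drop f a b q j :
  walk f a b q -> j <= q -> walk (fun k => f (j + k)) (f j) b (q - j).
Proof.
move=> [_ fq fA] jq; split; first by rewrite addn0.
  by rewrite subnKC.
by move=> k kq; rewrite addnS; apply: fA; lia.
Qed.

Definition shortcut_free (f : nat -> 'I_n) (q : nat) : Prop :=
  forall i j l r, i < j -> j <= q -> walk r (f i) (f j) l -> j - i <= l.

Lemma walk_shortcut_free f a b q : walk f a b q ->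
  exists g p, [/\ p <= q, walk g a b p & shortcut_free g p].
Proof.
elim/ltn_ind: q f => q IH f W.
case: (classic (exists i j l r,
  [/\ i < j, j <= q, l < j - i & walk r (f i) (f j) l])) => [|noshort].
  move=> [i [j [l [r [ij jq lji Wr]]]]].
  have W' := walk_cat (walk_cat (walk_take W (ltnW (leq_trans ij jq))) Wr)
                      (walk_drop W jq).
  have [|g [p [pq Wg Fg]]] := IH _ _ _ W'; first lia.
  by exists g, p; split=> //; lia.
exists f, q; split=> // i j l r ij jq Wr; rewrite leqNgt; apply/negP => lji.
by apply: noshort; exists i, j, l, r.
Qed.

Lemma uniq_mkseq_lt (T : eqType) (g : nat -> T) m :
  (forall i j, i < j -> j < m -> g i != g j) -> uniq (mkseq g m).
Proof.
move=> neq; rewrite /mkseq map_inj_in_uniq ?iota_uniq // => i j.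
rewrite !mem_iota /= => im jm gij.
by case: (ltngtP i j) => // [ij | ji];
  [move: (neq _ _ ij jm) | move: (neq _ _ ji im)]; rewrite gij eqxx.
Qed.

Section ShortcutFreeWalk.
Variables (f : nat -> 'I_n) (a b : 'I_n) (q : nat).
Hypotheses (Hwalk : walk f a b q) (Hfree : shortcut_free f q).

Lemma free_neq i j : i < j -> j <= q -> f i != f j.
Proof.
move=> ij jq; apply/eqP => fij; have := Hfree ij jq.
by rewrite fij => /(_ _ _ (walk0 _)); lia.
Qed.

Lemma free_no_common_edge i j X :
  i.+1 < j -> j <= q -> X \in E -> f i \in X -> f j \in X -> False.
Proof.
move=> ij jq XE iX jX.
have fij := free_neq (ltnW ij) jq.
by have := Hfree (ltnW ij) jq (walk1 (edge_adjacent XE iX jX fij)); lia.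
Qed.

Lemma free_no_common_neighbour i j y : i.+2 < j -> j <= q ->
  adjacent E (f i) y -> adjacent E y (f j) -> False.
Proof.
move=> ij jq iy yj.
by have := Hfree (ltnW (ltnW ij)) jq (walk_cat (walk1 iy) (walk1 yj)); lia.
Qed.

Let e k := edge_of (f k) (f k.+1).

Lemma free_edgeP k : k < q -> [/\ e k \in E, f k \in e k & f k.+1 \in e k].
Proof. by case: Hwalk => _ _ fA /fA /edge_ofP. Qed.

Lemma free_edge_neq i j : i < j -> j < q -> e i != e j.
Proof.
move=> ij jq; apply/eqP => eij.
have [Ei iE _] := free_edgeP (ltn_trans ij jq).
have [_ _ jE] := free_edgeP jq.
by apply: (free_no_common_edge (j := j.+1) ij jq Ei iE); rewrite eij.
Qed.

Lemma free_edge_disjoint i j : i.+1 < j -> j < q -> [disjoint e i & e j].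
Proof.
move=> ij jq; have [Ei iEi i1Ei] := free_edgeP (ltn_trans (ltnW ij) jq).
have [Ej jEj j1Ej] := free_edgeP jq.
rewrite -setI_eq0; apply/eqP/setP => y; rewrite !inE.
apply/negP => /andP[yi yj].
have [yfi | nyi] := eqVneq y (f i).
  rewrite yfi in yj.
  exact: (free_no_common_edge (j := j.+1) (ltnW ij) jq Ej yj j1Ej).
have [yfj | nyj] := eqVneq y (f j.+1).
  rewrite yfj in yi.
  exact: (free_no_common_edge (j := j.+1) (ltnW ij) jq Ei iEi yi).
apply: (free_no_common_neighbour (j := j.+1) (y := y) ij jq).
  by apply: (edge_adjacent Ei iEi yi); rewrite eq_sym.
exact: edge_adjacent Ej yj j1Ej nyj.
Qed.

Lemma free_loose_path : has_loose_path E a b q.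
Proof.
have [f0 fq _] := Hwalk.
pose vs : q.+1.-tuple 'I_n := Tuple (introT eqP (size_mkseq f q.+1)).
pose es : q.-tuple {set 'I_n} := Tuple (introT eqP (size_mkseq e q)).
have vsE : tval vs = mkseq f q.+1 by [].
have esE : tval es = mkseq e q by [].
apply/existsP; exists vs; apply/existsP; exists es; rewrite /loose_path vsE esE.
apply/and5P; split.
- by apply: uniq_mkseq_lt => i j ij jq; apply: free_neq.
- exact: uniq_mkseq_lt free_edge_neq.
- apply/allP => X /mapP[k]; rewrite mem_iota => /andP[_ kq] ->.
  by case: (free_edgeP kq).
- by rewrite nth_mkseq // f0.
apply/and3P; split.
- by rewrite nth_mkseq // fq.
- apply/forallP => i; rewrite !nth_mkseq ?ltnS ?(ltnW (ltn_ord i)) //.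
  by case: (free_edgeP (ltn_ord i)) => _ -> ->.
apply/forallP => i; apply/forallP => j; apply/implyP => ij.
by rewrite !nth_mkseq //; apply: free_edge_disjoint.
Qed.

End ShortcutFreeWalk.

Lemma walk_has_loose_path f a b q :
  walk f a b q -> exists2 p, p <= q & has_loose_path E a b p.
Proof.
case/walk_shortcut_free=> g [p [pq Wg Fg]].
by exists p => //; apply: free_loose_path Wg Fg.
Qed.

Lemma loose_path_walk a b p : has_loose_path E a b p -> exists f, walk f a b p.
Proof.
case/existsP=> vs /existsP[es /and5P[Uv _ Ae /eqP v0 /and3P[/eqP vp Hin _]]].
exists (nth a vs); split=> // k kp.
have /andP[kX k1X] := forallP Hin (Ordinal kp).
apply: (edge_adjacent _ kX k1X).
  by apply: (allP Ae); rewrite mem_nth ?size_tuple.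
by rewrite /= nth_uniq ?size_tuple ?ltn_eqF // ltnW.
Qed.

Lemma loose_path_ltn a b p : has_loose_path E a b p -> p < n.
Proof.
case/existsP=> vs /existsP[es /andP[Uv _]].
have := uniq_leq_size Uv (fun y _ => mem_enum 'I_n y).
by rewrite size_tuple size_enum_ord.
Qed.

Lemma hdist_le a b p : has_loose_path E a b p -> hdist E a b <= p.
Proof.
move=> abp; have pn := loose_path_ltn abp; rewrite leqNgt; apply/negP => lt.
by have := before_find 0 lt; rewrite nth_iota // add0n abp.
Qed.

Lemma hdist_path a b : connected E -> has_loose_path E a b (hdist E a b).
Proof.
move=> C; have [p abp] := C a b.
have hasp : has (has_loose_path E a b) (iota 0 n).
  by apply/hasP; exists p => //; rewrite mem_iota (loose_path_ltn abp).
have dn : hdist E a b < n by rewrite -[X in _ < X](size_iota 0 n) -has_find.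
by have := nth_find 0 hasp; rewrite nth_iota.
Qed.

Lemma walk_hdist_le f a b q : walk f a b q -> hdist E a b <= q.
Proof. by case/walk_has_loose_path=> p pq /hdist_le/leq_trans; apply. Qed.

Lemma hdistxx a : hdist E a a = 0.
Proof. by apply/eqP; rewrite -leqn0; apply: walk_hdist_le (walk0 a). Qed.

Lemma hdist_gt0 a b : connected E -> a != b -> 0 < hdist E a b.
Proof.
move=> C ab; rewrite lt0n; apply: contra ab => /eqP d0.
have [f [f0 fd _]] := loose_path_walk (hdist_path a b C).
by rewrite -f0 -fd d0.
Qed.

Lemma hdist_adj_leS u v z : connected E -> adjacent E v u ->
  hdist E v z <= (hdist E u z).+1.
Proof.
move=> C vu; have [f W] := loose_path_walk (hdist_path u z C).
exact: walk_hdist_le (walk_cat (walk1 vu) W).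
Qed.

Lemma hdist_comb_ge u v w z : connected E -> adjacent E u v -> w != v ->
  hdist E v z + (z == v) <= hdist E w z + hdist E u z + (z == w).
Proof.
move=> C uv wv; move: (hdist_adj_leS z C (adjacent_sym uv)).
have [-> | zv] := eqVneq z v.
  by rewrite hdistxx; have := hdist_gt0 C (andP uv).1; lia.
have [-> | zw] := eqVneq z w; first by rewrite hdistxx; lia.
have wz : w != z by rewrite eq_sym.
by have := hdist_gt0 C wz; lia.
Qed.

End LooseDistance.

Local Open Scope ring_scope.

Lemma sum_delta_mul (R : nzSemiRingType) n (y : 'I_n -> R) k :
  \sum_z (z == k)%:R * y z = y k.
Proof.
rewrite (bigD1 k) //= eqxx mul1r big1 ?addr0 // => z /negbTE ->.
by rewrite mul0r.
Qed.

Section EigenvectorRows.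
Variables (R : realFieldType) (n : nat) (A : 'M[R]_n) (x : 'cV[R]_n) (rho : R).
Hypothesis Ax : A *m x = rho *: x.

Lemma eigen_row i : \sum_j A i j * x j 0 = rho * x i 0.
Proof. by move/(congr1 (fun M : 'cV_n => M i 0)): Ax; rewrite !mxE. Qed.

Lemma eigen_ge0 (i : 'I_n) :
  (forall j k, 0 <= A j k) -> (forall j, 0 < x j 0) -> 0 <= rho.
Proof.
move=> A_ge0 x_gt0; rewrite -(pmulr_lge0 _ (x_gt0 i)) -eigen_row.
by apply: sumr_ge0 => j _; rewrite mulr_ge0 // ltW.
Qed.

Lemma eigen_comb a b c :
  rho * (x a 0 + x b 0 - x c 0) = \sum_j (A a j + A b j - A c j) * x j 0.
Proof.
rewrite mulrBr mulrDr -!eigen_row -big_split -sumrB /=.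
by apply: eq_bigr => j _; rewrite mulrBl mulrDl.
Qed.

End EigenvectorRows.

Lemma dist_comb_ge (R : realFieldType) n (E : {set {set 'I_n}}) (u v w : 'I_n)
    (x : 'cV[R]_n) :
  connected E -> adjacent E u v -> w != v -> (forall j, 0 <= x j 0) ->
  x v 0 - x w 0 <= \sum_z (dist_matrix R E w z + dist_matrix R E u z
                            - dist_matrix R E v z) * x z 0.
Proof.
move=> C uv wv x_ge0.
rewrite -(sum_delta_mul (x^~ 0) v) -(sum_delta_mul (x^~ 0) w) -sumrB.
apply: ler_sum => z _; rewrite -mulrBl ler_wpM2r // !mxE.
have := hdist_comb_ge z C uv wv; rewrite -(ler_nat R) !natrD; lra.
Qed.

Theorem lemma4p3 (R : realFieldType) (n : nat) (E : {set {set 'I_n}})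
  (u v w : 'I_n) (x : 'cV[R]_n) :
  hypergraph E -> connected E ->
  adjacent E u v -> adjacent E u w -> v != w -> ~~ adjacent E v w ->
  distance_perron_vector E x ->
  0 < x w 0 + x u 0 - x v 0.
Proof.
move=> _ C uv _ vw _ [rho [_ _ Ax x_gt0 _]].
have x_ge0 j : 0 <= x j 0 := ltW (x_gt0 j).
have rho_ge0 : 0 <= rho.
  by apply: (eigen_ge0 Ax u) x_gt0 => i j; rewrite mxE ler0n.
have wv : w != v by rewrite eq_sym.
have := dist_comb_ge C uv wv x_ge0; rewrite -(eigen_comb Ax).
by have := x_gt0 u; nra.
Qed.
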